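(* Let $(TQ\times\mathbb R^m,\vec\lambda^L,E_L)$ be the $m$-contact Lagrangian system of a regular Lagrangian $L:TQ\times\mathbb R^m\to\mathbb R$, and let $$X=F_i\frac{\partial}{\partial q^i}+G_j\frac{\partial}{\partial \dot q^j}+H_k\frac{\partial}{\partial z^k}$$ be a vector field on $TQ\times\mathbb R^m$ which is an $m$-Cartan symmetry, i.e. $\mathcal L_X\lambda^L_i=df_i$ for some $f_i\in C^\infty(TQ\times\mathbb R^m)$, $i=1,\dots,m$. Then for each $i=1,\dots,m$, the $1$-form $d\big(f_i-H_i+X^v(L)\big)$ vanishes on the Reeb distribution, i.e. $d\big(f_i-H_i+X^v(L)\big)(R_k)=0$ for all $k=1,\dots,m$.
   Context: $Q$ is an $n$-dimensional manifold; $TQ\times\mathbb R^m$ has local coordinates $(q^i,\dot q^i,z^1,\dots,z^m)$. $L$ is regular if $W_{ij}=\partial^2L/\partial\dot q^i\partial\dot q^j$ is invertible, with inverse $(W^{ij})$. Define $\lambda^L_k=dz^k-\frac{\partial L}{\partial\dot q^j}dq^j$ ($k=1,\dots,m$) and the Reeb vector fields $R_k=\frac{\partial}{\partial z^k}-W^{ij}\frac{\partial^2L}{\partial\dot q^i\partial z^k}\frac{\partial}{\partial\dot q^j}$, which span the Reeb distribution $\mathcal R$. For $X$ as in the claim, $X^v:=S(X)=F_i\frac{\partial}{\partial\dot q^i}$, where $S=\frac{\partial}{\partial\dot q^i}\otimes dq^i$ is the vertical endomorphism; thus $X^v(L)=F_i\frac{\partial L}{\partial\dot q^i}$. *)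

(* Local-coordinate formalization on a chart domain
   U (open) of TQ x R^m, identified with an open subset of R^(n+n+m)
   with coordinates (q^1..q^n, qdot^1..qdot^n, z^1..z^m). *)
From HB Require Import structures.
From mathcomp Require Import all_boot all_order all_algebra.
From mathcomp Require Import all_classical all_reals.
From mathcomp Require Import topology normedtype derive.
Set Implicit Arguments. Unset Strict Implicit. Unset Printing Implicit Defensive.
Import Order.TTheory GRing.Theory Num.Theory.
Import numFieldNormedType.Exports.
Local Open Scope classical_set_scope.
Local Open Scope ring_scope.

Section Defs.
Variables (R : realType) (n m : nat).

Notation N := (n + n + m)%N.
Notation pt := 'rV[R]_N.

Definition iq (i : 'I_n) : 'I_N := lshift m (lshift n i).
Definition iv (i : 'I_n) : 'I_N := lshift m (rshift n i).
Definition iz (k : 'I_m) : 'I_N := rshift (n + n) k.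

Definition pd (f : pt -> R) (a : 'I_N) : pt -> R :=
  fun x => derive f x (delta_mx 0 a).

Fixpoint iter_pd (s : seq 'I_N) (f : pt -> R) : pt -> R :=
  match s with
  | [::] => f
  | a :: s' => pd (iter_pd s' f) a
  end.

Definition smooth_on (U : set pt) (f : pt -> R) : Prop :=
  forall (s : seq 'I_N) (x : pt), U x -> differentiable (iter_pd s f) x.

Definition blk (T : Type) (A B : 'I_n -> T) (C : 'I_m -> T) (b : 'I_N) : T :=
  match fintype.split b with
  | inl b' => match fintype.split b' with inl i => A i | inr i => B i end
  | inr k => C k
  end.

Definition vfield := 'I_N -> pt -> R.
Definition oneform := 'I_N -> pt -> R.

(* Lie derivative of a 1-form along a vector field (coordinate formula
   (L_X a)_c = X^b d_b a_c + a_b d_c X^b) *)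
Definition lie (X : vfield) (al : oneform) : oneform :=
  fun c x => \sum_(b < N) X b x * pd (al c) b x + \sum_(b < N) al b x * pd (X b) c x.

Definition dfun (g : pt -> R) : oneform := fun a => pd g a.
Definition eval1 (al : oneform) (Y : vfield) (x : pt) : R :=
  \sum_(a < N) al a x * Y a x.

Definition Wmx (L : pt -> R) (x : pt) : 'M[R]_n :=
  \matrix_(i, j) pd (pd L (iv j)) (iv i) x.

Definition regular_on (U : set pt) (L : pt -> R) : Prop :=
  forall x, U x -> Wmx L x \in unitmx.

(* lambda^L_k = dz^k - dL/dqdot^j dq^j *)
Definition lamL (L : pt -> R) (k : 'I_m) : oneform :=
  blk (fun j x => - pd L (iv j) x) (fun _ _ => 0)
      (fun l _ => if l == k then 1 else 0).

(* Reeb vector fields R_k = d/dz^k - W^{ij} d^2L/dqdot^i dz^k d/dqdot^j *)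
Definition reeb (L : pt -> R) (k : 'I_m) : vfield :=
  blk (fun _ _ => 0)
      (fun j x => - \sum_(i < n) invmx (Wmx L x) i j * pd (pd L (iz k)) (iv i) x)
      (fun l _ => if l == k then 1 else 0).

Definition vf (F G : 'I_n -> pt -> R) (H : 'I_m -> pt -> R) : vfield := blk F G H.

(* X^v(L) = S(X)(L) = F_i dL/dqdot^i *)
Definition XvL (F : 'I_n -> pt -> R) (L : pt -> R) : pt -> R :=
  fun x => \sum_(i < n) F i x * pd L (iv i) x.

End Defs.

From HB Require Import structures.
From mathcomp Require Import all_boot all_order all_algebra.
From mathcomp Require Import all_classical all_reals.
From mathcomp Require Import topology normedtype derive.
From mathcomp Require Import lra ring.
Import Order.TTheory GRing.Theory Num.Theory.
Import numFieldNormedType.Exports.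
Local Open Scope classical_set_scope.
Local Open Scope ring_scope.
Set Implicit Arguments.
Unset Strict Implicit.

(* In a direction c along which lambda^L_i has constant components (a velocity
   or a z direction) the Cartan condition L_X lambda^L_i = df_i reads
   d_c f_i = d_c H_i - (dL/dqdot^j) d_c F^j, so the derivatives of F cancel in
   d_c (f_i - H_i + X^v(L)) = F^j d_c d_(qdot^j) L.  The Reeb field R_k only has
   such components, whence
   d(f_i - H_i + X^v(L))(R_k) = F^j (d_(z^k) d_(qdot^j) L - W_lj W^il d_(qdot^i) d_(z^k) L),
   which vanishes by W^-1 W = 1 and the symmetry of second derivatives; the
   latter (Schwarz) is derived from the mean value theorem applied twice to a
   second difference. *)

Lemma MVT_closed (R : realType) (phi dphi : R -> R) (h : R) : 0 < h ->
  (forall s, 0 <= s <= h -> is_derive s 1 phi (dphi s)) ->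
  exists2 c, 0 <= c <= h & phi h - phi 0 = dphi c * h.
Proof.
move=> h0 dphiP.
have itv_closed c : c \in `]0, h[ -> 0 <= c <= h.
  by rewrite in_itv /= => /andP[c0 ch]; rewrite !ltW.
have phi_cont : {within `[0, h], continuous phi}.
  apply: derivable_within_continuous => c; rewrite in_itv /= => cI.
  by case: (dphiP c cI).
have [c /itv_closed cI E] := MVT h0 (fun c cI => dphiP c (itv_closed c cI)) phi_cont.
by exists c => //; rewrite E subr0.
Qed.

Section SecondDerivatives.
Variables (R : realType) (V : normedModType R).
Implicit Types (f : V -> R) (x y u v w : V).

Lemma is_derive_along_line f y w (s : R) :
  derivable f (y + s *: w) w ->
  is_derive s 1 (fun t : R => f (y + t *: w)) (derive f (y + s *: w) w).
Proof.
move=> df.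
have E : (fun h : R => h^-1 *: (((fun t : R => f (y + t *: w)) \o shift s) (h *: 1)
                                 - f (y + s *: w)))
       = (fun h : R => h^-1 *: ((f \o shift (y + s *: w)) (h *: w) - f (y + s *: w))).
  apply/funext => h /=; congr (_ *: (f _ - _)).
  by rewrite [h%:A]mulr1 scalerDl addrCA addrA.
by apply: DeriveDef; [rewrite /derivable E | rewrite /derive E].
Qed.

Lemma second_difference_mvt f (S : set V) x u v (h : R) : 0 < h ->
  (forall s t, 0 <= s <= h -> 0 <= t <= h -> S (x + s *: u + t *: v)) ->
  (forall p, S p -> differentiable f p) ->
  (forall p, S p -> differentiable (fun y => derive f y u) p) ->
  exists2 p, S p & f (x + h *: u + h *: v) - f (x + h *: u) - f (x + h *: v) + f x
                   = h * h * derive (fun y => derive f y u) p v.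
Proof.
move=> h0 inS df dfu.
have h_in : 0 <= h <= h by apply/andP; split; lra.
have zero_in : 0 <= (0 : R) <= h by apply/andP; split; lra.
pose phi s := f (x + h *: v + s *: u) - f (x + s *: u).
have [s s_in Ephi] : exists2 s, 0 <= s <= h & phi h - phi 0
    = (derive f (x + h *: v + s *: u) u - derive f (x + s *: u) u) * h.
  apply: MVT_closed h0 _ => s s_in.
  apply: is_deriveB; apply: is_derive_along_line; apply: diff_derivable; apply: df.
    by rewrite addrAC; apply: inS.
  by have := inS _ _ s_in zero_in; rewrite scale0r addr0.
pose psi t := derive f (x + s *: u + t *: v) u.
have [t t_in Epsi] : exists2 t, 0 <= t <= h & psi h - psi 0
    = derive (fun y => derive f y u) (x + s *: u + t *: v) v * h.
  apply: MVT_closed h0 _ => t t_in.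
  by apply: is_derive_along_line; apply: diff_derivable; apply/dfu/inS.
exists (x + s *: u + t *: v); first exact: inS.
move: Ephi Epsi; rewrite /phi /psi !scale0r !addr0.
rewrite (addrAC x (h *: v) (h *: u)) (addrAC x (h *: v) (s *: u)) => Ephi Epsi.
transitivity ((derive f (x + s *: u + h *: v) u - derive f (x + s *: u) u) * h).
  by rewrite -Ephi; ring.
by rewrite Epsi; ring.
Qed.

Lemma ball_parallelogram x u v (r : R) : 0 < r ->
  exists2 h : R, 0 < h &
    forall s t, 0 <= s <= h -> 0 <= t <= h -> ball x r (x + s *: u + t *: v).
Proof.
move=> r0; have uv0 : 0 < `|u| + `|v| + 1 by rewrite ltr_wpDl ?addr_ge0.
exists (r / (`|u| + `|v| + 1)) => [|s t /andP[s0 sh] /andP[t0 th]].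
  by rewrite divr_gt0.
rewrite -ball_normE /ball_ /= -addrA opprD addNKr normrN.
apply: (le_lt_trans (ler_normD _ _)); rewrite !normrZ !ger0_norm //.
set h := r / _ in sh th.
have -> : r = h * (`|u| + `|v| + 1) by rewrite divfK ?lt0r_neq0.
have h0 : 0 < h by rewrite divr_gt0.
apply: (@le_lt_trans _ _ (h * `|u| + h * `|v|)); first by rewrite lerD // ler_wpM2r.
by rewrite -mulrDr ltr_pM2l // ltrDl.
Qed.

Lemma derive2_comm f (U : set V) x u v : open U -> U x ->
  (forall p, U p -> differentiable f p) ->
  (forall p, U p -> differentiable (fun y => derive f y u) p) ->
  (forall p, U p -> differentiable (fun y => derive f y v) p) ->
  {for x, continuous (fun y => derive (fun z => derive f z u) y v)} ->
  {for x, continuous (fun y => derive (fun z => derive f z v) y u)} ->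
  derive (fun y => derive f y u) x v = derive (fun y => derive f y v) x u.
Proof.
move=> oU Ux df dfu dfv cA cB.
set A := fun y => _ in cA *; set B := fun y => _ in cB *.
rewrite -/(A x) -/(B x); apply/eqP; rewrite -subr_eq0 -normr_le0.
apply/ler_addgt0Pr => e e0; rewrite add0r.
have e20 : 0 < e / 2 by rewrite divr_gt0.
have /nbhs_ballP[r r0 near_x] : \forall p \near x,
    U p /\ `|A x - A p| < e / 2 /\ `|B x - B p| < e / 2.
  apply: filterS3 (fun p a b c => conj a (conj b c)) _ _ _.
  - exact: open_nbhs_nbhs.
  - exact: (cvgrPdist_lt _ _).1 cA _ e20.
  - exact: (cvgrPdist_lt _ _).1 cB _ e20.
have [h h0 inball] := ball_parallelogram x u v r0.
have inballC s t : 0 <= s <= h -> 0 <= t <= h -> ball x r (x + s *: v + t *: u).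
  by move=> ? ?; rewrite addrAC; exact: inball.
have [p1 /near_x[_ [Ap1 _]] E1] := second_difference_mvt h0 inball
  (fun p bp => df p (near_x p bp).1) (fun p bp => dfu p (near_x p bp).1).
have [p2 /near_x[_ [_ Bp2]] E2] := second_difference_mvt h0 inballC
  (fun p bp => df p (near_x p bp).1) (fun p bp => dfv p (near_x p bp).1).
have hh0 : h * h != 0 by rewrite mulf_neq0 // gt_eqF.
have ABp : A p1 = B p2.
  apply: (mulfI hh0); apply: etrans (esym E1) (etrans _ E2).
  rewrite (addrAC x (h *: v) (h *: u)).
  by congr (_ + _); exact: addrAC.
have -> : A x - B x = (A x - A p1) + (B p2 - B x) by rewrite ABp addrA subrK.
rewrite (splitr e); apply: le_trans (ler_normD _ _) _.
have Bp2' : `|B p2 - B x| <= e / 2 by rewrite distrC; exact: ltW.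
exact: lerD (ltW Ap1) Bp2'.
Qed.

End SecondDerivatives.

Lemma sum_mul_invmx (R : comUnitRingType) n (W : 'M[R]_n) (a c : 'I_n -> R) :
  W \in unitmx ->
  \sum_l (\sum_j a j * W l j) * (\sum_i invmx W i l * c i) = \sum_j a j * c j.
Proof.
move=> Wunit.
transitivity (\sum_j \sum_i a j * (invmx W *m W) i j * c i).
  under eq_bigr do rewrite mulr_suml.
  rewrite exchange_big /=; apply: eq_bigr => j _.
  under eq_bigr do rewrite mulr_sumr.
  rewrite exchange_big /=; apply: eq_bigr => i _.
  rewrite mxE mulr_sumr mulr_suml; apply: eq_bigr => l _.
  by rewrite mulrCA !mulrA [a j * _]mulrC.
rewrite mulVmx //; apply: eq_bigr => j _.
rewrite (bigD1 j) //= big1 => [|i /negbTE ij]; rewrite mxE ?eqxx ?ij.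
  by rewrite mulr1 addr0.
by rewrite mulr0 mul0r.
Qed.

Section Coordinates.
Variables (R : realType) (n m : nat).
Local Notation N := (n + n + m)%N.
Local Notation pt := 'rV[R]_N.

Lemma blk_iq T (A B : 'I_n -> T) (C : 'I_m -> T) j : blk A B C (iq m j) = A j.
Proof. by rewrite /blk /iq !(unsplitK (inl _)). Qed.

Lemma blk_iv T (A B : 'I_n -> T) (C : 'I_m -> T) j : blk A B C (iv m j) = B j.
Proof. by rewrite /blk /iv (unsplitK (inl _)) (unsplitK (inr _)). Qed.

Lemma blk_iz T (A B : 'I_n -> T) (C : 'I_m -> T) k : blk A B C (iz n k) = C k.
Proof. by rewrite /blk /iz (unsplitK (inr _)). Qed.

Lemma sum_coords (V : nmodType) (g : 'I_N -> V) :
  \sum_(b < N) g b =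
  \sum_(j < n) g (iq m j) + \sum_(j < n) g (iv m j) + \sum_(k < m) g (iz n k).
Proof. by rewrite big_split_ord /= big_split_ord. Qed.

Lemma lamL_iv (L : pt -> R) k j : lamL L k (iv m j) = fun _ => 0.
Proof. by rewrite /lamL blk_iv. Qed.

Lemma lamL_iz (L : pt -> R) k l :
  lamL L k (iz n l) = fun _ => if l == k then 1 else 0.
Proof. by rewrite /lamL blk_iz. Qed.

Lemma lamL_pairing (L : pt -> R) k (Y : 'I_N -> R) x :
  \sum_(b < N) lamL L k b x * Y b = Y (iz n k) - \sum_(j < n) pd L (iv m j) x * Y (iq m j).
Proof.
rewrite sum_coords addrC.
rewrite [X in _ + (_ + X)]big1 => [|j _]; last by rewrite lamL_iv mul0r.
rewrite addr0 -sumrN; congr (_ + _).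
  rewrite (bigD1 k) //= big1 => [|l /negbTE lk]; last by rewrite lamL_iz lk mul0r.
  by rewrite lamL_iz eqxx mul1r addr0.
by apply: eq_bigr => j _; rewrite /lamL blk_iq mulNr.
Qed.

Lemma lie_const_component (X : vfield R n m) (al : oneform R n m) c (k : R) x :
  al c = (fun _ => k) -> lie X al c x = \sum_(b < N) al b x * pd (X b) c x.
Proof.
move=> alc; rewrite /lie alc big1 ?add0r // => b _.
by rewrite /pd (_ : (fun _ => k) = cst k) // derive_cst mulr0.
Qed.

Lemma eval1_reeb (al : oneform R n m) (L : pt -> R) k x :
  eval1 al (reeb L k) x = al (iz n k) x -
    \sum_(l < n) al (iv m l) x *
      \sum_(i < n) invmx (Wmx L x) i l * pd (pd L (iz n k)) (iv m i) x.
Proof.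
rewrite /eval1 sum_coords big1 => [|j _]; last by rewrite /reeb blk_iq mulr0.
rewrite add0r addrC -sumrN; congr (_ + _).
  rewrite (bigD1 k) //= big1 => [|l /negbTE lk]; last by rewrite /reeb blk_iz lk mulr0.
  by rewrite /reeb blk_iz eqxx mulr1 addr0.
by apply: eq_bigr => l _; rewrite /reeb blk_iv mulrN.
Qed.

Lemma XvLE (F : 'I_n -> pt -> R) (L : pt -> R) :
  XvL F L = \sum_(j < n) (F j * pd L (iv m j)).
Proof. by apply/funext => y; rewrite fct_sumE. Qed.

Lemma pd_XvL (F : 'I_n -> pt -> R) (L : pt -> R) c x :
  (forall j, derivable (F j) x (delta_mx 0 c)) ->
  (forall j, derivable (pd L (iv m j)) x (delta_mx 0 c)) ->
  pd (XvL F L) c x =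
  \sum_(j < n) (F j x * pd (pd L (iv m j)) c x + pd L (iv m j) x * pd (F j) c x).
Proof.
move=> dF dL; rewrite XvLE /pd derive_sum => [|j]; last exact: derivableM (dF j) (dL j).
by apply: eq_bigr => j _; rewrite (deriveM (dF j) (dL j)).
Qed.

Section Smooth.
Variable U : set pt.

Lemma smooth_derivable g s x v :
  smooth_on U g -> U x -> derivable (iter_pd s g) x v.
Proof. by move=> sg Ux; apply/diff_derivable/sg. Qed.

Lemma pd_comm g a b x : open U -> smooth_on U g -> U x ->
  pd (pd g a) b x = pd (pd g b) a x.
Proof.
move=> oU sg Ux; apply: (derive2_comm oU Ux) => [p|p|p||]; try exact: (sg [::]).
- exact: (sg [:: a]).
- exact: (sg [:: b]).
- exact/differentiable_continuous/(sg [:: b; a]).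
- exact/differentiable_continuous/(sg [:: a; b]).
Qed.

End Smooth.
End Coordinates.

Section CartanSymmetry.
Variables (R : realType) (n m : nat) (U : set 'rV[R]_(n + n + m)).
Local Notation pt := 'rV[R]_(n + n + m).
Variables (L : pt -> R) (F G : 'I_n -> pt -> R) (H f : 'I_m -> pt -> R).
Hypotheses (sL : smooth_on U L) (sF : forall j, smooth_on U (F j)).
Hypotheses (sH : forall k, smooth_on U (H k)) (sf : forall i, smooth_on U (f i)).
Hypothesis cartan :
  forall i a x, U x -> lie (vf F G H) (lamL L i) a x = dfun (f i) a x.

Lemma cartan_pd_const_dir i c (k : R) x : U x -> lamL L i c = (fun _ => k) ->
  pd (f i) c x = pd (H i) c x - \sum_(j < n) pd L (iv m j) x * pd (F j) c x.
Proof.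
move=> Ux lc; rewrite -[LHS]/(dfun (f i) c x) -cartan // (lie_const_component _ _ lc).
by rewrite lamL_pairing /vf blk_iz; under eq_bigr do rewrite blk_iq.
Qed.

Lemma pd_cartan_quantity i c (k : R) x : U x -> lamL L i c = (fun _ => k) ->
  pd (fun y => f i y - H i y + XvL F L y) c x =
  \sum_(j < n) F j x * pd (pd L (iv m j)) c x.
Proof.
move=> Ux lc.
have d g s : smooth_on U g -> derivable (iter_pd s g) x (delta_mx 0 c).
  by move=> sg; exact: smooth_derivable sg Ux.
have dfi := d _ [::] (sf i); have dHi := d _ [::] (sH i).
have dfH := derivableB dfi dHi.
have dXvL : derivable (XvL F L) x (delta_mx 0 c).
  rewrite XvLE; apply: derivable_sum => j.
  exact: derivableM (d _ [::] (sF j)) (d _ [:: iv m j] sL).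
have -> : (fun y => f i y - H i y + XvL F L y) = f i - H i + XvL F L by [].
rewrite /pd (deriveD dfH dXvL) (deriveB dfi dHi).
rewrite -/(pd (f i) c x) -/(pd (H i) c x) -/(pd (XvL F L) c x).
rewrite pd_XvL => [|j|j]; [|exact: d _ [::] (sF j)|exact: d _ [:: iv m j] sL].
rewrite (cartan_pd_const_dir Ux lc) big_split /=.
ring.
Qed.

End CartanSymmetry.

Theorem theorem6 (R : realType) (n m : nat) (U : set 'rV[R]_(n + n + m))
  (L : 'rV[R]_(n + n + m) -> R)
  (F G : 'I_n -> 'rV[R]_(n + n + m) -> R) (H : 'I_m -> 'rV[R]_(n + n + m) -> R)
  (f : 'I_m -> 'rV[R]_(n + n + m) -> R) :
  open U ->
  smooth_on U L ->
  regular_on U L ->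
  (forall i, smooth_on U (F i)) ->
  (forall j, smooth_on U (G j)) ->
  (forall k, smooth_on U (H k)) ->
  (forall i, smooth_on U (f i)) ->
  (forall i a x, U x -> lie (vf F G H) (lamL L i) a x = dfun (f i) a x) ->
  forall (i k : 'I_m) (x : 'rV[R]_(n + n + m)), U x ->
    eval1 (dfun (fun y => f i y - H i y + XvL F L y)) (reeb L k) x = 0.
Proof.
(* G is only seen through the qdot-components of X, on which lambda^L_i vanishes. *)
move=> oU sL rL sF _ sH sf cartan i k x Ux.
have quantity := pd_cartan_quantity sL sF sH sf cartan Ux.
pose c j := pd (pd L (iz n k)) (iv m j) x.
have comm j : pd (pd L (iv m j)) (iz n k) x = c j := pd_comm _ _ oU sL Ux.
rewrite eval1_reeb /dfun (quantity _ _ _ (lamL_iz L i k)).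
under [X in X - _]eq_bigr => j _ do rewrite comm.
rewrite -(sum_mul_invmx (fun j => F j x) c (rL x Ux)).
apply/eqP; rewrite subr_eq0; apply/eqP/eq_bigr => l _; congr (_ * _).
rewrite (quantity _ _ _ (lamL_iv L i l)).
by apply: eq_bigr => j _; rewrite mxE.
Qed.
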